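(* Let $n\ge3$ and let $l$ be the largest SIA index among all $n\times n$ SIA matrices. Among the sets $\mathcal S_1,\mathcal S_2,\ldots,\mathcal S_l$, the set $\mathcal S_1$ is the only one that is closed under matrix multiplication (i.e., $P,Q\in\mathcal S_k\Rightarrow PQ\in\mathcal S_k$ holds for $k=1$ and fails for every $2\le k\le l$).
   Context: Let $\mathcal N=\{1,\ldots,n\}$. A matrix is stochastic if it is entrywise nonnegative with row sums $1$. For stochastic $P$ and $\mathcal A\subseteq\mathcal N$, $F_P(\mathcal A)=\{j:\ p_{ij}>0\text{ for some } i\in\mathcal A\}$, $F_P^1=F_P$, $F_P^k(\mathcal A)=F_P(F_P^{k-1}(\mathcal A))$. $P$ is SIA if $\lim_{m\to\infty}P^m=\mathbf 1c^T$ for some nonnegative $c$ with entries summing to $1$. For an SIA matrix $P$ and each unordered pair of disjoint nonempty sets $\mathcal A,\tilde{\mathcal A}\subseteq\mathcal N$, let $s(\mathcal A,\tilde{\mathcal A})$ be the smallest integer $k\ge1$ such that either (i) $F_P^k(\mathcal A)\cap F_P^k(\tilde{\mathcal A})\ne\emptyset$, or (ii) $F_P^k(\mathcal A)\cap F_P^k(\tilde{\mathcal A})=\emptyset$ and $|F_P^k(\mathcal A)\cup F_P^k(\tilde{\mathcal A})|>|\mathcal A\cup\tilde{\mathcal A}|$. The SIA index of $P$ is the maximum of $s(\mathcal A,\tilde{\mathcal A})$ over all such pairs (it is at most $n(n-1)/2$). $\mathcal V_k$ is the set of $n\times n$ SIA matrices with SIA index exactly $k$, and $\mathcal S_k=\bigcup_{r=1}^k\mathcal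 V_r$. The set $\mathcal S_1$ coincides with the class of stochastic Sarymsakov matrices: stochastic $P$ such that for any disjoint nonempty $\mathcal A,\tilde{\mathcal A}\subseteq\mathcal N$, either $F_P(\mathcal A)\cap F_P(\tilde{\mathcal A})\neq\emptyset$, or $F_P(\mathcal A)\cap F_P(\tilde{\mathcal A})=\emptyset$ and $|F_P(\mathcal A)\cup F_P(\tilde{\mathcal A})|>|\mathcal A\cup\tilde{\mathcal A}|$. *)

From mathcomp Require Import all_boot.
From Stdlib Require Import Reals.

Set Implicit Arguments.
Unset Strict Implicit.
Unset Printing Implicit Defensive.

Definition rmat (n : nat) := 'I_n -> 'I_n -> R.

Definition rsum (n : nat) (f : 'I_n -> R) : R := \big[Rplus/0%R]_(k < n) f k.

Definition mmul (n : nat) (P Q : rmat n) : rmat n :=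
  fun i j => rsum (fun k => Rmult (P i k) (Q k j)).

Definition mid (n : nat) : rmat n :=
  fun i j => if i == j then 1%R else 0%R.

Fixpoint mpow (n : nat) (P : rmat n) (m : nat) : rmat n :=
  match m with
  | 0 => @mid n
  | m'.+1 => mmul (mpow P m') P
  end.

Definition stochastic (n : nat) (P : rmat n) : Prop :=
  (forall i j, Rle 0 (P i j)) /\ (forall i, rsum (fun j => P i j) = 1%R).

Definition SIA (n : nat) (P : rmat n) : Prop :=
  stochastic P /\
  exists c : 'I_n -> R,
    (forall j, Rle 0 (c j)) /\ rsum c = 1%R /\
    (forall i j, Un_cv (fun m => mpow P m i j) (c j)).

Definition posb (x : R) : bool := if Rlt_dec 0 x then true else false.

Definition Fset (n : nat) (P : rmat n) (A : {set 'I_n}) : {set 'I_n} :=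
  [set j | [exists i in A, posb (P i j)]].

Definition Fk (n : nat) (P : rmat n) (k : nat) (A : {set 'I_n}) : {set 'I_n} :=
  iter k (Fset P) A.

Definition sia_cond (n : nat) (P : rmat n) (A B : {set 'I_n}) (k : nat) : bool :=
  (Fk P k A :&: Fk P k B != set0)
  || ((Fk P k A :&: Fk P k B == set0)
      && (#|A :|: B| < #|Fk P k A :|: Fk P k B|)).

Definition is_s (n : nat) (P : rmat n) (A B : {set 'I_n}) (s : nat) : Prop :=
  1 <= s /\ sia_cond P A B s /\ (forall k, 1 <= k -> k < s -> ~~ sia_cond P A B k).

Definition admissible_pair (n : nat) (A B : {set 'I_n}) : Prop :=
  A != set0 /\ B != set0 /\ [disjoint A & B].

Definition sia_index (n : nat) (P : rmat n) (k : nat) : Prop :=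
  (exists A B, admissible_pair A B /\ is_s P A B k) /\
  (forall A B s, admissible_pair A B -> is_s P A B s -> s <= k).

Definition Vk (n k : nat) (P : rmat n) : Prop := SIA P /\ sia_index P k.

Definition Sk (n k : nat) (P : rmat n) : Prop :=
  exists r, 1 <= r /\ r <= k /\ Vk r P.

Definition mul_closed (n : nat) (S : rmat n -> Prop) : Prop :=
  forall P Q, S P -> S Q -> S (mmul P Q).

Definition largest_sia_index (n l : nat) : Prop :=
  (exists P : rmat n, Vk l P) /\ (forall (P : rmat n) r, Vk r P -> r <= l).

From HB Require Import structures.
From mathcomp Require Import all_boot.
From Stdlib Require Import Reals Lra FunctionalExtensionality.

Set Implicit Arguments.
Unset Strict Implicit.
Unset Printing Implicit Defensive.

(* Matrices of SIA index 1 are Sarymsakov matrices, since for an SIA matrix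
   every pair eventually satisfies condition (i).  Sarymsakov matrices are
   closed under products: if F_P(A) and F_P(B) meet, so do their images under
   Q (every row of Q has a positive entry); otherwise they form an admissible
   pair of larger total size, which Q either merges or enlarges again.  A
   Sarymsakov matrix is SIA: starting from two singletons, the union of the
   images cannot grow n times, so P^n is scrambling, and a scrambling power
   contracts the oscillation of every column of P^m geometrically, which gives
   a rank-one limit.  For k >= 2, the 0-1 matrices of the maps
   f = (2 |-> 1, else 0) and g = (1 |-> 0, else 2) have SIA index 2, while
   g o f swaps 0 and 2, so the powers of their product oscillate. *)

Local Open Scope R_scope.

HB.instance Definition _ := Monoid.isComLaw.Build R 0 Rplus
  (fun a b c => esym (Rplus_assoc a b c)) Rplus_comm Rplus_0_l.
HB.instance Definition _ := Monoid.isMulLaw.Build R 0 Rmult Rmult_0_l Rmult_0_r.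
HB.instance Definition _ := Monoid.isAddLaw.Build R Rmult Rplus
  Rmult_plus_distr_r Rmult_plus_distr_l.

Lemma posbP x : reflect (0 < x) (posb x).
Proof. by rewrite /posb; case: Rlt_dec => h; constructor. Qed.

Section Sums.
Variable n : nat.
Implicit Types f g : 'I_n -> R.

Lemma eq_rsum f g : f =1 g -> rsum f = rsum g.
Proof. by move=> fg; apply: eq_bigr. Qed.

Lemma rsum_ge0 f : (forall k, 0 <= f k) -> 0 <= rsum f.
Proof. by move=> f0; apply: big_ind => // *; lra. Qed.

Lemma ler_rsum f g : (forall k, f k <= g k) -> rsum f <= rsum g.
Proof. by move=> fg; apply: (big_ind2 (fun x y => x <= y)) => // *; lra. Qed.

Lemma rsumD f g : rsum (fun k => f k + g k) = rsum f + rsum g.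
Proof. exact: big_split. Qed.

Lemma rsumZ a f : rsum (fun k => a * f k) = a * rsum f.
Proof. by rewrite /rsum big_distrr. Qed.

Lemma exchange_rsum (F : 'I_n -> 'I_n -> R) :
  rsum (fun i => rsum (fun j => F i j)) = rsum (fun j => rsum (fun i => F i j)).
Proof. exact: exchange_big. Qed.

Lemma rsum_delta (k : 'I_n) a : rsum (fun j => if k == j then a else 0) = a.
Proof.
rewrite /rsum (bigD1 k) //= eqxx big1; first lra.
by move=> j; rewrite eq_sym => /negbTE ->.
Qed.

Lemma rsum_term_le f k : (forall j, 0 <= f j) -> f k <= rsum f.
Proof.
move=> f0; rewrite /rsum (bigD1 k) //=; set rest := (X in _ <= _ + X).
have : 0 <= rest by apply: big_ind => // *; lra.
lra.
Qed.

Lemma rsum_gt0P f : (forall j, 0 <= f j) -> 0 < rsum f <-> exists k, 0 < f k.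
Proof.
move=> f0; split=> [sum_gt0|[k fk]]; last by have := rsum_term_le k f0; lra.
have [/existsP [k /posbP]|/existsP no_pos] := boolP [exists k, posb (f k)].
  by exists k.
suff : rsum f = 0 by lra.
apply: big1 => k _; have := f0 k.
have : ~ 0 < f k by move=> /posbP fk; apply: no_pos; exists k.
lra.
Qed.

End Sums.

Section Matrices.
Variable n : nat.
Implicit Types P Q T : rmat n.

Definition nonneg_mx P := forall i j, 0 <= P i j.

Lemma rmatP P Q : (forall i j, P i j = Q i j) -> P = Q.
Proof. by move=> PQ; do 2 (apply: functional_extensionality => ?); apply: PQ. Qed.

Lemma mmulA P Q T : mmul (mmul P Q) T = mmul P (mmul Q T).
Proof.
apply: rmatP => i j; rewrite /mmul.
transitivity (rsum (fun k => rsum (fun l => P i l * Q l k * T k j))).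
  by apply: eq_rsum => k; rewrite Rmult_comm -rsumZ; apply: eq_rsum => l /=; lra.
rewrite exchange_rsum; apply: eq_rsum => l.
by rewrite -rsumZ; apply: eq_rsum => k /=; lra.
Qed.

Lemma mulmx1 P : mmul P (@mid n) = P.
Proof.
apply: rmatP => i j; rewrite -[RHS](rsum_delta j); apply: eq_rsum => k.
by rewrite /mid eq_sym; case: eqP => [->|_] /=; lra.
Qed.

Lemma mpowD P a b : mpow P (a + b) = mmul (mpow P a) (mpow P b).
Proof. by elim: b => [|b IH]; rewrite ?addn0 ?mulmx1 // addnS /= IH mmulA. Qed.

Lemma mmul_ge0 P Q : nonneg_mx P -> nonneg_mx Q -> nonneg_mx (mmul P Q).
Proof. by move=> P0 Q0 i j; apply: rsum_ge0 => k; apply: Rmult_le_pos. Qed.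

Lemma mid_ge0 : nonneg_mx (@mid n).
Proof. by move=> i j; rewrite /mid; case: eqP => _; lra. Qed.

Lemma mpow_ge0 P m : nonneg_mx P -> nonneg_mx (mpow P m).
Proof. by move=> P0; elim: m => [|m IH] /=; [apply: mid_ge0 | apply: mmul_ge0]. Qed.

Lemma stochastic_mmul P Q : stochastic P -> stochastic Q -> stochastic (mmul P Q).
Proof.
move=> [P0 P1] [Q0 Q1]; split; first exact: mmul_ge0.
move=> i; rewrite /mmul exchange_rsum -(P1 i); apply: eq_rsum => k.
by rewrite rsumZ Q1 Rmult_1_r.
Qed.

Lemma stochastic_mid : stochastic (@mid n).
Proof. by split; [apply: mid_ge0 | move=> i; apply: rsum_delta]. Qed.

Lemma stochastic_mpow P m : stochastic P -> stochastic (mpow P m).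
Proof.
by move=> HP; elim: m => [|m IH] /=; [apply: stochastic_mid | apply: stochastic_mmul].
Qed.

Lemma stochastic_le1 P i j : stochastic P -> P i j <= 1.
Proof. by move=> [P0 P1]; rewrite -(P1 i); apply: (rsum_term_le j (P0 i)). Qed.

Lemma mmul_gt0P P Q i j : nonneg_mx P -> nonneg_mx Q ->
  0 < mmul P Q i j <-> exists k, 0 < P i k /\ 0 < Q k j.
Proof.
move=> P0 Q0; rewrite rsum_gt0P => [|k]; last exact: Rmult_le_pos.
split=> -[k Hk]; exists k; last by apply: Rmult_lt_0_compat; case: Hk.
by have := P0 i k; have := Q0 k j; split; nra.
Qed.

Lemma in_Fset P A j : (j \in Fset P A) = [exists i in A, posb (P i j)].
Proof. by rewrite inE. Qed.

Lemma Fset_mid A : Fset (@mid n) A = A.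
Proof.
apply/setP => j; rewrite in_Fset; apply/existsP/idP => [[i /andP [iA]]|jA].
  by rewrite /mid; case: eqP => [<- //|_] /posbP; lra.
by exists j; rewrite jA; apply/posbP; rewrite /mid eqxx; lra.
Qed.

Lemma Fset_mmul P Q A : nonneg_mx P -> nonneg_mx Q ->
  Fset (mmul P Q) A = Fset Q (Fset P A).
Proof.
move=> P0 Q0; apply/setP => j; rewrite !in_Fset; apply/existsP/existsP.
  move=> [i /andP [iA /posbP /(mmul_gt0P _ _ P0 Q0) [k [Pik Qkj]]]].
  exists k; rewrite in_Fset; apply/andP; split; last exact/posbP.
  by apply/existsP; exists i; rewrite iA; apply/posbP.
move=> [k /andP []]; rewrite in_Fset => /existsP [i /andP [iA /posbP Pik]] /posbP Qkj.
exists i; rewrite iA; apply/posbP/(mmul_gt0P _ _ P0 Q0); by exists k.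
Qed.

Lemma Fk_mpow P m A : nonneg_mx P -> Fk P m A = Fset (mpow P m) A.
Proof.
move=> P0; elim: m => [|m IH]; first by rewrite Fset_mid.
by rewrite /Fk iterS -/(Fk P m A) IH /= Fset_mmul //; apply: mpow_ge0.
Qed.

End Matrices.

Section Sarymsakov.
Variable n : nat.
Implicit Types (P Q : rmat n) (A B : {set 'I_n}).

Definition sarymsakov P := forall A B, admissible_pair A B -> sia_cond P A B 1.

Definition scrambling P := forall i i', exists k, 0 < P i k /\ 0 < P i' k.

Lemma admissible_set1 (a b : 'I_n) : a != b -> admissible_pair [set a] [set b].
Proof.
move=> ab; split; first by apply/set0Pn; exists a; rewrite inE.
by split; [apply/set0Pn; exists b; rewrite inE | rewrite disjoints1 inE].
Qed.

Lemma Fset_neq0 P A : stochastic P -> A != set0 -> Fset P A != set0.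
Proof.
move=> [P0 P1] /set0Pn [i iA].
have [k Pik] : exists k, 0 < P i k by apply/(rsum_gt0P (P0 i)); rewrite P1; lra.
by apply/set0Pn; exists k; rewrite in_Fset; apply/existsP; exists i; rewrite iA; apply/posbP.
Qed.

Lemma Fk_neq0 P m A : stochastic P -> A != set0 -> Fk P m A != set0.
Proof. by move=> HP A0; elim: m => [|m IH] //=; apply: Fset_neq0. Qed.

Lemma FsetS P A B : A \subset B -> Fset P A \subset Fset P B.
Proof.
move=> /subsetP AB; apply/subsetP => j; rewrite !in_Fset => /existsP [i /andP [iA Pij]].
by apply/existsP; exists i; rewrite AB.
Qed.

Lemma Fset_setI_neq0 P A B : stochastic P -> A :&: B != set0 ->
  Fset P A :&: Fset P B != set0.
Proof.
move=> HP /(Fset_neq0 HP) /set0Pn [j jF]; apply/set0Pn; exists j.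
by rewrite inE !(subsetP (FsetS P _) j jF) // ?subsetIl ?subsetIr.
Qed.

Lemma sia_cond1E P A B : sia_cond P A B 1 =
  (Fset P A :&: Fset P B != set0) ||
  ((Fset P A :&: Fset P B == set0) && (#|A :|: B| < #|Fset P A :|: Fset P B|)%nat).
Proof. by []. Qed.

Lemma admissible_Fset P A B : stochastic P -> admissible_pair A B ->
  Fset P A :&: Fset P B = set0 -> admissible_pair (Fset P A) (Fset P B).
Proof.
move=> HP [A0 [B0 _]] disj; split; first exact: Fset_neq0.
by split; [exact: Fset_neq0 | rewrite -setI_eq0 disj].
Qed.

Lemma sarymsakov_mmul P Q : stochastic P -> stochastic Q ->
  sarymsakov P -> sarymsakov Q -> sarymsakov (mmul P Q).
Proof.
move=> HP HQ SP SQ A B AB; rewrite sia_cond1E !Fset_mmul; try exact: HP.1; try exact: HQ.1.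
have := SP A B AB; rewrite sia_cond1E => /orP [meet | /andP [/eqP disj grow]].
  by rewrite Fset_setI_neq0.
have := SQ _ _ (admissible_Fset HP AB disj); rewrite sia_cond1E.
case/orP => [-> // | /andP [disjQ growQ]].
by rewrite disjQ (ltn_trans grow growQ) orbT.
Qed.

Lemma sarymsakov_Fk_grow P A B : stochastic P -> sarymsakov P -> admissible_pair A B ->
  forall m, (Fk P m A :&: Fk P m B != set0) \/
    (Fk P m A :&: Fk P m B = set0 /\ (#|A :|: B| + m <= #|Fk P m A :|: Fk P m B|)%nat).
Proof.
move=> HP SP AB; elim=> [|m [meet | [disj grow]]].
- by right; split; [apply/eqP; rewrite setI_eq0; case: AB => _ [] | rewrite addn0].
- by left; apply: Fset_setI_neq0.
- have [A0 [B0 _]] := AB.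
  have AB' : admissible_pair (Fk P m A) (Fk P m B).
    by split; [exact: Fk_neq0 | split; [exact: Fk_neq0 | rewrite -setI_eq0 disj]].
  have := SP _ _ AB'; rewrite sia_cond1E => /orP [meet | /andP [/eqP disj' grow']].
    by left.
  by right; split => //; rewrite addnS; apply: leq_trans grow'.
Qed.

Lemma sarymsakov_scrambling P : stochastic P -> sarymsakov P -> scrambling (mpow P n).
Proof.
move=> HP SP i i'; have Pn := stochastic_mpow n HP.
have [<-|ii'] := eqVneq i i'.
  have [k Pik] : exists k, 0 < mpow P n i k by apply/(rsum_gt0P (Pn.1 i)); rewrite Pn.2; lra.
  by exists k.
have [meet|[_ grow]] := sarymsakov_Fk_grow HP SP (admissible_set1 ii') n; last first.
  have := leq_trans grow (max_card _).
  by rewrite card_ord cardsU1 cards1 inE ii' addn1 addSn ltnNge leq_addl.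
move: meet; rewrite !Fk_mpow; try exact: HP.1.
case/set0Pn => k; rewrite inE !in_Fset.
case/andP => /existsP [x /andP [xi /posbP Pxk]] /existsP [y /andP [yi /posbP Pyk]].
by exists k; move: xi yi Pxk Pyk; rewrite !inE => /eqP -> /eqP ->.
Qed.

Lemma SIA_exists_sia_cond P A B : SIA P -> A != set0 -> B != set0 ->
  exists k, (0 < k)%nat && sia_cond P A B k.
Proof.
move=> [HP [c [c0 [c1 Pc]]]] /set0Pn [a aA] /set0Pn [b bB].
have [j cj] : exists j, 0 < c j by apply/(rsum_gt0P c0); lra.
have pos_at i N m : (forall m, (m >= N)%coq_nat -> Rdist (mpow P m i j) (c j) < c j) ->
    (N <= m)%nat -> 0 < mpow P m i j.
  by move=> Hi /leP Nm; have := Hi m Nm; rewrite /Rdist /Rabs; case: Rcase_abs; move=> *; lra.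
have [Na Ha] := Pc a j (c j) cj.
have [Nb Hb] := Pc b j (c j) cj.
set m := maxn (maxn Na Nb) 1.
have Nam : (Na <= m)%nat by rewrite !leq_max leqnn.
have Nbm : (Nb <= m)%nat by rewrite !leq_max leqnn orbT.
have m_gt0 : (0 < m)%nat by rewrite !leq_max orbT.
exists m; rewrite m_gt0 /=; apply/orP; left; apply/set0Pn; exists j.
rewrite inE !Fk_mpow ?in_Fset; try exact: HP.1.
by apply/andP; split; apply/existsP; [exists a | exists b];
  rewrite ?aA ?bB; apply/posbP; [exact: (pos_at a Na) | exact: (pos_at b Nb)].
Qed.

Lemma exists_is_s P A B :
  (exists k, (0 < k)%nat && sia_cond P A B k) -> exists s, is_s P A B s.
Proof.
move=> ex; case: (ex_minnP ex) => s /andP [s_gt0 cs] smin.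
exists s; split => //; split => // k k_gt0 ks; apply/negP => ck.
by have := smin k; rewrite k_gt0 ck => /(_ isT); rewrite leqNgt ks.
Qed.

Lemma Vk1_sarymsakov P : Vk 1 P -> sarymsakov P.
Proof.
move=> [SIA_P [_ index_le1]] A B AB; have [A0 [B0 _]] := AB.
have [s sAB] := exists_is_s (SIA_exists_sia_cond SIA_P A0 B0).
have s1 : s = 1%nat by apply/eqP; rewrite eqn_leq sAB.1 (index_le1 A B s AB sAB).
by rewrite -s1; case: sAB => _ [].
Qed.

Lemma sarymsakov_sia_index P (a b : 'I_n) : a != b -> sarymsakov P -> sia_index P 1.
Proof.
move=> ab SP; split.
  exists [set a], [set b]; split; first exact: admissible_set1.
  split => //; split; first by apply: SP; apply: admissible_set1.
  by move=> k k_ge1; rewrite ltnNge k_ge1.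
move=> A B s AB [_ [_ smin]]; rewrite leqNgt; apply/negP => s_gt1.
by move: (smin 1%nat isT s_gt1); rewrite SP.
Qed.

End Sarymsakov.

Lemma fin_argmax (I : finType) (i0 : I) (F : I -> R) : exists im, forall i, F i <= F im.
Proof.
suff [im H] : exists im, forall i, i \in enum I -> F i <= F im.
  by exists im => i; apply: H; rewrite mem_enum.
elim: (enum I) => [|x s [im IH]]; first by exists i0.
have [Fx_le|Fx_gt] := Rle_dec (F x) (F im).
  by exists im => i; rewrite inE => /orP [/eqP ->|/IH].
by exists x => i; rewrite inE => /orP [/eqP ->|/IH]; lra.
Qed.

Lemma fin_argmin (I : finType) (i0 : I) (F : I -> R) : exists im, forall i, F im <= F i.
Proof. by have [im H] := fin_argmax i0 (fun i => - F i); exists im => i; have := H i; lra. Qed.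

Lemma Un_cv_big (I : Type) (r : seq I) (u : nat -> I -> R) (c : I -> R) :
  (forall j, Un_cv (fun m => u m j) (c j)) ->
  Un_cv (fun m => \big[Rplus/0]_(j <- r) u m j) (\big[Rplus/0]_(j <- r) c j).
Proof.
move=> uc; elim: r => [|x r IH].
  move=> e e_gt0; exists 0%nat => m _.
  by rewrite !big_nil /Rdist Rminus_diag Rabs_R0.
rewrite big_cons; apply: Un_cv_ext (CV_plus _ _ _ _ (uc x) IH) => m.
by rewrite big_cons.
Qed.

Section Contraction.
Variable n : nat.
Implicit Types (P T : rmat n) (x : 'I_n -> R).

Definition mxv P x i := rsum (fun l => P i l * x l).

Lemma mxv_cst T c i : stochastic T -> mxv T (fun=> c) i = c.
Proof.
move=> [_ T1]; rewrite /mxv (eq_rsum (g := fun l => c * T i l)) => [|l]; last by lra.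
by rewrite rsumZ T1 Rmult_1_r.
Qed.

Lemma mxv_bounds T x a b : stochastic T -> (forall l, a <= x l <= b) ->
  forall i, a <= mxv T x i <= b.
Proof.
move=> HT x_ab i; rewrite -(mxv_cst a i HT) -(mxv_cst b i HT).
by split; apply: ler_rsum => l; apply: Rmult_le_compat_l;
  [exact: HT.1 | exact: (x_ab l).1 | exact: HT.1 | exact: (x_ab l).2].
Qed.

Lemma mxvD T x y i : mxv T (fun l => x l + y l) i = mxv T x i + mxv T y i.
Proof. by rewrite /mxv -rsumD; apply: eq_rsum => l; rewrite Rmult_plus_distr_l. Qed.

Lemma mxv_oscillation T e x a b : stochastic T ->
  (forall i i', exists k, e <= T i k /\ e <= T i' k) -> (forall l, a <= x l <= b) ->
  forall i i', mxv T x i - mxv T x i' <= (1 - e) * (b - a).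
Proof.
move=> HT Te x_ab i i'; have [k [eTik eTi'k]] := Te i i'.
have x_le_b l : 0 <= b - x l by have := x_ab l; lra.
have a_le_x l : 0 <= x l - a by have := x_ab l; lra.
have split_b : b = mxv T (fun l => b - x l) i + mxv T x i.
  rewrite -mxvD -{1}(mxv_cst b i HT); apply: eq_rsum => l /=.
  by congr (_ * _); ring.
have split_a : mxv T x i' = a + mxv T (fun l => x l - a) i'.
  rewrite -{1}(mxv_cst a i' HT) -mxvD; apply: eq_rsum => l /=.
  by congr (_ * _); ring.
have gap_b : e * (b - x k) <= mxv T (fun l => b - x l) i.
  have := @rsum_term_le _ (fun l => T i l * (b - x l)) k
    (fun l => Rmult_le_pos _ _ (HT.1 i l) (x_le_b l)).
  by have := x_le_b k; have := a_le_x k; rewrite /mxv /=; nra.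
have gap_a : e * (x k - a) <= mxv T (fun l => x l - a) i'.
  have := @rsum_term_le _ (fun l => T i' l * (x l - a)) k
    (fun l => Rmult_le_pos _ _ (HT.1 i' l) (a_le_x l)).
  by have := x_le_b k; have := a_le_x k; rewrite /mxv /=; nra.
nra.
Qed.

Section Convergence.
Variables (P : rmat n) (K : nat) (e : R) (i0 : 'I_n).
Hypothesis HP : stochastic P.
Hypothesis e_gt0 : 0 < e.
Hypothesis PK_scrambling : forall i i', exists k, e <= mpow P K i k /\ e <= mpow P K i' k.

Lemma scrambling_const_le1 : e <= 1.
Proof.
have [k [ePk _]] := PK_scrambling i0 i0.
exact: Rle_trans ePk (stochastic_le1 _ _ (stochastic_mpow K HP)).
Qed.

Lemma column_bracket (x : 'I_n -> R) :
  exists imin imax, forall l, x imin <= x l <= x imax.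
Proof.
have [imin Hmin] := fin_argmin i0 x; have [imax Hmax] := fin_argmax i0 x.
by exists imin, imax.
Qed.

Lemma mpow_column_osc j q m : (q * K <= m)%nat ->
  forall i i', Rabs (mpow P m i j - mpow P m i' j) <= (1 - e) ^ q.
Proof.
elim: q m => [|q IH] m qKm i i'.
  have Pm := stochastic_mpow m HP.
  have := stochastic_le1 i j Pm; have := stochastic_le1 i' j Pm.
  have := Pm.1 i j; have := Pm.1 i' j.
  by rewrite /= /Rabs; case: Rcase_abs; move=> *; lra.
have Km : (K <= m)%nat by apply: leq_trans qKm; rewrite mulSn leq_addr.
have qKm' : (q * K <= m - K)%nat by rewrite leq_subRL // -mulSn.
set x := fun l => mpow P (m - K) l j.
have [imin [imax x_range]] := column_bracket x.
have osc_x : x imax - x imin <= (1 - e) ^ q.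
  have := IH _ qKm' imax imin; rewrite -/(x imax) -/(x imin).
  by rewrite /Rabs; case: Rcase_abs; move=> *; lra.
have Pm_mxv l : mpow P m l j = mxv (mpow P K) x l by rewrite -{1}(subnKC Km) mpowD.
have C1 := mxv_oscillation (stochastic_mpow K HP) PK_scrambling x_range i i'.
have C2 := mxv_oscillation (stochastic_mpow K HP) PK_scrambling x_range i' i.
have e1 := scrambling_const_le1.
have : (1 - e) * (x imax - x imin) <= (1 - e) * (1 - e) ^ q.
  by apply: Rmult_le_compat_l; lra.
by rewrite !Pm_mxv /= /Rabs; case: Rcase_abs; move=> *; lra.
Qed.

Lemma mpow_column_drift j m m' d : (m <= m')%nat ->
  (forall i i', Rabs (mpow P m i j - mpow P m i' j) <= d) ->
  forall i, Rabs (mpow P m' i j - mpow P m i j) <= d.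
Proof.
move=> mm' osc i.
have [imin [imax /= x_range]] := column_bracket (fun l => mpow P m l j).
have := mxv_bounds (x := fun l => mpow P m l j) (stochastic_mpow (m' - m) HP) x_range i.
rewrite /mxv -[rsum _]/(mmul (mpow P (m' - m)) (mpow P m) i j) -mpowD subnK //.
have := osc imax imin; have := x_range i.
by rewrite /Rabs; do 2 case: Rcase_abs; move=> *; lra.
Qed.

Lemma contraction_pow_small eps : 0 < eps -> exists q, (1 - e) ^ q < eps.
Proof.
move=> eps_gt0; have e1 := scrambling_const_le1.
have [|N HN] := pow_lt_1_zero (1 - e) _ eps eps_gt0.
  by rewrite /Rabs; case: Rcase_abs; move=> *; lra.
exists N; have := HN N (le_n N); have := pow_le (1 - e) N ltac:(lra).
by rewrite /Rabs; case: Rcase_abs; move=> *; lra.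
Qed.

Lemma mpow_column_cv j : {l | forall i, Un_cv (fun m => mpow P m i j) l}.
Proof.
have cauchy : Cauchy_crit (fun m => mpow P m i0 j).
  move=> eps eps_gt0; have [q Hq] := @contraction_pow_small (eps / 2) ltac:(lra).
  exists (q * K)%nat => a b /leP qKa /leP qKb.
  have osc := mpow_column_osc j (leqnn (q * K)).
  have := mpow_column_drift qKa osc i0; have := mpow_column_drift qKb osc i0.
  by rewrite /Rdist /Rabs; do 3 case: Rcase_abs; move=> *; lra.
have [l Hl] := R_complete _ cauchy.
exists l => i eps eps_gt0.
have [q Hq] := @contraction_pow_small (eps / 2) ltac:(lra).
have [N HN] := Hl (eps / 2) ltac:(lra).
exists (maxn N (q * K)) => m /leP Nm.
have := mpow_column_osc j (leq_trans (leq_maxr N _) Nm) i i0.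
have := HN m (leP (leq_trans (leq_maxl _ _) Nm)).
by rewrite /Rdist /Rabs; do 3 case: Rcase_abs; move=> *; lra.
Qed.

Lemma SIA_of_uniform_scrambling : SIA P.
Proof.
split => //; pose c j := sval (mpow_column_cv j).
have Pc i j : Un_cv (fun m => mpow P m i j) (c j) by apply: (proj2_sig (mpow_column_cv j)).
exists c; split.
  move=> j; apply: (Rle_cv_lim (Un := fun=> 0) _ _ (Pc i0 j)) => [m|].
    exact: (stochastic_mpow m HP).1.
  by move=> eps eps_gt0; exists 0%nat => m _; rewrite /Rdist Rminus_diag Rabs_R0.
split => //; apply: UL_sequence (Un_cv_big (index_enum 'I_n) (fun j => Pc i0 j)) _.
move=> eps eps_gt0; exists 0%nat => m _.
by have := (stochastic_mpow m HP).2 i0; rewrite /rsum => ->; rewrite /Rdist Rminus_diag Rabs_R0.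
Qed.

End Convergence.

Lemma scrambling_SIA P K (i0 : 'I_n) : stochastic P -> scrambling (mpow P K) -> SIA P.
Proof.
move=> HP PK_scr.
(* Zero entries are replaced by 1, so the minimum of F is a positive lower
   bound for every entry witnessing that P^K is scrambling. *)
pose F (ii : 'I_n * 'I_n) := if posb (mpow P K ii.1 ii.2) then mpow P K ii.1 ii.2 else 1.
have [kmin Fmin] := fin_argmin (i0, i0) F.
apply: (@SIA_of_uniform_scrambling P K (F kmin) i0 HP).
  by rewrite /F; case: posbP => _ //; lra.
move=> i i'; have [k [Pik Pi'k]] := PK_scr i i'; exists k.
have := Fmin (i, k); have := Fmin (i', k); set lb := F kmin; rewrite /F /=.
by do 2 case: posbP; move=> *; split; lra.
Qed.

Lemma sarymsakov_SIA P (i0 : 'I_n) : stochastic P -> sarymsakov P -> SIA P.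
Proof. by move=> HP SP; apply: scrambling_SIA i0 HP (sarymsakov_scrambling HP SP). Qed.

End Contraction.

Lemma Sk1P n (P : rmat n) : Sk 1 P <-> Vk 1 P.
Proof.
split=> [[r [r_ge1 [r_le1 VP]]]|VP]; last by exists 1%nat.
by have /eqP <- : r == 1%nat by rewrite eqn_leq r_le1.
Qed.

Section FunctionMatrices.
Variable n : nat.
Implicit Types (f g h : 'I_n -> 'I_n) (A : {set 'I_n}).

Definition fun_mx f : rmat n := fun i j => if f i == j then 1 else 0.

Lemma stochastic_fun_mx f : stochastic (fun_mx f).
Proof.
split=> [i j|i]; last exact: rsum_delta.
by rewrite /fun_mx; case: eqP => _; lra.
Qed.

Lemma mmul_fun_mx f g : mmul (fun_mx f) (fun_mx g) = fun_mx (g \o f).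
Proof.
apply: rmatP => i j; rewrite -[RHS](rsum_delta (f i)); apply: eq_rsum => k.
by rewrite /fun_mx; case: eqP => [<-|_] /=; lra.
Qed.

Lemma mpow_fun_mx f m : mpow (fun_mx f) m = fun_mx (iter m f).
Proof. by elim: m => [|m IH] /=; [apply: rmatP | rewrite IH mmul_fun_mx]. Qed.

Lemma Fset_fun_mx f A : Fset (fun_mx f) A = f @: A.
Proof.
apply/setP => j; rewrite in_Fset; apply/existsP/imsetP => [[i /andP [iA]]|[i iA ->]].
  by rewrite /fun_mx; case: eqP => [<- _|_ /posbP]; [exists i | lra].
by exists i; rewrite iA; apply/posbP; rewrite /fun_mx eqxx; lra.
Qed.

Lemma Fk_fun_mx f m A : Fk (fun_mx f) m A = iter m f @: A.
Proof.
rewrite Fk_mpow ?mpow_fun_mx ?Fset_fun_mx //.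
exact: (stochastic_fun_mx f).1.
Qed.

Lemma SIA_fun_mx_eventually_const f K c : (forall x, iter K f x = c) -> SIA (fun_mx f).
Proof.
move=> fKc; split; first exact: stochastic_fun_mx.
exists (fun j => if c == j then 1 else 0); split; first by move=> j; case: eqP => _; lra.
split; first exact: rsum_delta.
move=> i j eps eps_gt0; exists K => m /leP Km.
by rewrite mpow_fun_mx /fun_mx -(subnKC Km) iterD fKc /Rdist Rminus_diag Rabs_R0.
Qed.

Lemma fun_mx_sia_index2 f a b c :
  (forall x, f (f x) = c) -> f a != f b -> sia_index (fun_mx f) 2.
Proof.
move=> ffc fab; have ab : a != b by apply: contraNneq fab => ->.
have cond2 A B : admissible_pair A B -> sia_cond (fun_mx f) A B 2.
  move=> [/set0Pn [x xA] [/set0Pn [y yB] _]]; apply/orP; left; apply/set0Pn; exists c.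
  rewrite inE !Fk_fun_mx; apply/andP; split; apply/imsetP; [exists x | exists y] => //=.
split.
  exists [set a], [set b]; split; first exact: admissible_set1.
  split => //; split; first by apply/cond2/admissible_set1.
  move=> k k_ge1 k_lt2; have -> : k = 1%nat by apply/eqP; rewrite eqn_leq -ltnS k_lt2 k_ge1.
  rewrite /sia_cond !Fk_fun_mx !imset_set1 /= setI_eq0 disjoints1 inE fab /=.
  by rewrite !cardsU1 !cards1 !inE ab fab.
move=> A B s AB [_ [_ smin]]; rewrite leqNgt; apply/negP => s_gt2.
by move: (smin 2%nat isT s_gt2); rewrite cond2.
Qed.

Lemma fun_mx_involution_not_SIA h a : h (h a) = a -> h a != a -> ~ SIA (fun_mx h).
Proof.
move=> hha ha [_ [c [_ [_ cv]]]].
have iter_even k : iter k.*2 h a = a by elim: k => //= k ->.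
have [N HN] := cv a a (1/2) ltac:(lra).
have N_le : (N <= N.*2)%nat by rewrite -addnn leq_addl.
have := HN N.*2 (leP N_le); have := HN N.*2.+1 (leP (leqW N_le)).
rewrite /Rdist !mpow_fun_mx /fun_mx /= iter_even eqxx (negbTE ha).
by rewrite /Rabs; do 2 case: Rcase_abs; move=> *; lra.
Qed.

End FunctionMatrices.

Local Close Scope R_scope.

Theorem theorem4 (n : nat) (hn : 3 <= n) (l : nat) (hl : largest_sia_index n l) :
  mul_closed (Sk 1 (n:=n)) /\
  (forall k, 2 <= k -> k <= l -> ~ mul_closed (Sk k (n:=n))).
Proof.
pose o0 : 'I_n := Ordinal (leq_trans (isT : 0 < 3) hn).
pose o1 : 'I_n := Ordinal (leq_trans (isT : 1 < 3) hn).
pose o2 : 'I_n := Ordinal hn.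
split.
  move=> P Q /Sk1P VP /Sk1P VQ; apply/Sk1P.
  have [HP HQ] := (VP.1.1, VQ.1.1).
  have SPQ := sarymsakov_mmul HP HQ (Vk1_sarymsakov VP) (Vk1_sarymsakov VQ).
  split; first exact: sarymsakov_SIA o0 (stochastic_mmul HP HQ) SPQ.
  exact: (@sarymsakov_sia_index _ _ o0 o1).
(* The witnesses have SIA index 2 <= k, so the bound l plays no role. *)
move=> k k_ge2 _ closed_k.
have Sk_fun_mx (h : 'I_n -> 'I_n) (a b c : 'I_n) :
    (forall x, h (h x) = c) -> h a != h b -> Sk k (fun_mx h).
  move=> hhc hab; exists 2; do 2 split => //; split.
    exact: (@SIA_fun_mx_eventually_const _ h 2 c).
  exact: fun_mx_sia_index2 hhc hab.
pose f x := if x == o2 then o1 else o0.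
pose g x := if x == o1 then o0 else o2.
have Sf : Sk k (fun_mx f).
  by apply: (Sk_fun_mx f o0 o2 o0) => [x|//]; rewrite /f; case: (x == o2).
have Sg : Sk k (fun_mx g).
  by apply: (Sk_fun_mx g o1 o2 o2) => [x|//]; rewrite /g; case: (x == o1).
have [r [_ [_ [SIA_gf _]]]] := closed_k _ _ Sf Sg.
by rewrite mmul_fun_mx in SIA_gf; apply: (@fun_mx_involution_not_SIA _ _ o0) SIA_gf.
Qed.
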